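(* Let $A$ be a ring with Jacobson radical $J(A)$. If the factor ring $A/J(A)$ is centrally essential, then $A/J(A)$ is commutative and $A$ is both right quasi-invariant and left quasi-invariant.
   Context: All rings are associative, unital and non-zero. $Z(A)$ denotes the center of a ring $A$. A ring $A$ is centrally essential if either $A$ is commutative or for every non-central element $a\in A$ there exist non-zero central elements $x,y\in Z(A)$ with $ax=y$ (equivalently, the module $A_{Z(A)}$ is an essential extension of $Z(A)_{Z(A)}$). A ring is right (resp. left) quasi-invariant if every maximal right (resp. left) ideal of it is a two-sided ideal. *)

From mathcomp Require Import all_boot all_algebra.
Set Implicit Arguments.
Unset Strict Implicit.
Unset Printing Implicit Defensive.
Import GRing.Theory.
Local Open Scope ring_scope.

Section Ideals.
Variable A : nzRingType.

Definition right_ideal (I : A -> Prop) : Prop :=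
  [/\ I 0, (forall x y, I x -> I y -> I (x + y)), (forall x, I x -> I (- x))
    & (forall x r, I x -> I (x * r))].

Definition left_ideal (I : A -> Prop) : Prop :=
  [/\ I 0, (forall x y, I x -> I y -> I (x + y)), (forall x, I x -> I (- x))
    & (forall x r, I x -> I (r * x))].

Definition two_sided_ideal (I : A -> Prop) : Prop := right_ideal I /\ left_ideal I.

Definition maximal_right_ideal (M : A -> Prop) : Prop :=
  [/\ right_ideal M, (exists x, ~ M x) &
      forall N : A -> Prop, right_ideal N -> (forall x, M x -> N x) ->
        (forall x, N x <-> M x) \/ (forall x, N x)].

Definition maximal_left_ideal (M : A -> Prop) : Prop :=
  [/\ left_ideal M, (exists x, ~ M x) &
      forall N : A -> Prop, left_ideal N -> (forall x, M x -> N x) ->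
        (forall x, N x <-> M x) \/ (forall x, N x)].

Definition jacobson (x : A) : Prop :=
  forall M, maximal_right_ideal M -> M x.

Definition right_quasi_invariant : Prop :=
  forall M, maximal_right_ideal M -> two_sided_ideal M.
Definition left_quasi_invariant : Prop :=
  forall M, maximal_left_ideal M -> two_sided_ideal M.

(* Notions for the factor ring A/I, written on representatives:
   the class of a is 0 iff I a; classes of a and b are equal iff I (a - b). *)
Section Factor.
Variable I : A -> Prop.

Definition central_mod (a : A) : Prop := forall b, I (a * b - b * a).

Definition commutative_mod : Prop := forall a b, I (a * b - b * a).

Definition centrally_essential_mod : Prop :=
  commutative_mod \/
  forall a, ~ central_mod a ->
    exists x y, [/\ central_mod x, central_mod y, ~ I x, ~ I y & I (a * x - y)].
End Factor.
End Ideals.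

From mathcomp Require Import all_boot all_algebra.
From mathcomp Require Import boolp classical_sets.
From Stdlib Require Import Morphisms.
Set Implicit Arguments.
Unset Strict Implicit.
Unset Printing Implicit Defensive.
Import GRing.Theory.
Local Open Scope ring_scope.
Local Open Scope classical_set_scope.

(* J(A) is a two-sided ideal and A/J(A) has no nonzero central element u with
   u^2 = 0: if u lay outside a maximal right ideal M, then 1 = m + u s with
   m in M, and since u commutes with m modulo J(A), which lies in M, the element
   u = u m + u^2 s would lie in M.
   In a ring without such elements central essentiality forces commutativity.
   Otherwise some commutator c = [a, d] is central and nonzero (an essential
   witness x for a noncentral [a, b] gives [a, b x] = [a, b] x central); then
   [a c, d] = c^2 is nonzero, so a c is not central, and a witness z with
   a c z = w central gives c^2 z = [w, d] = 0, whence (c z)^2 = 0, c z = 0 and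
   w = 0, a contradiction.
   Finally every maximal right or left ideal contains J(A) (for left ideals
   because the elements 1 - k, k in J(A), are units), and an ideal containing
   all commutators modulo J(A) is two-sided. *)

Section CongruenceModIdeal.
Variables (A : nzRingType) (I : A -> Prop).
Hypothesis I_ideal : two_sided_ideal I.

Let I0 : I 0. Proof. by case: I_ideal => -[]. Qed.
Let ID x y : I x -> I y -> I (x + y).
Proof. by case: I_ideal => -[_ ID _ _] _; apply: ID. Qed.
Let IN x : I x -> I (- x).
Proof. by case: I_ideal => -[_ _ IN _] _; apply: IN. Qed.
Let IMr x r : I x -> I (x * r).
Proof. by case: I_ideal => -[_ _ _ IM] _; apply: IM. Qed.
Let IMl x r : I x -> I (r * x).
Proof. by case: I_ideal => _ [_ _ _ IM]; apply: IM. Qed.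

Definition eqmod (x y : A) := I (x - y).
Local Notation "x ≡ y" := (eqmod x y) (at level 70).

Lemma eqmodE x y : (x ≡ y) = I (x - y). Proof. by []. Qed.

Lemma eqmod0 x : (x ≡ 0) = I x. Proof. by rewrite eqmodE subr0. Qed.

Lemma central_modP x : central_mod I x <-> forall b, x * b ≡ b * x.
Proof. by []. Qed.

Instance eqmod_equivalence : Equivalence eqmod.
Proof.
split.
- by move=> x; rewrite /eqmod subrr.
- by move=> x y /IN; rewrite /eqmod opprB.
- by move=> x y z /ID h /h; rewrite /eqmod addrA subrK.
Qed.

Instance addr_eqmod : Proper (eqmod ==> eqmod ==> eqmod) (@GRing.add A).
Proof. by move=> x x' /ID h y y' /h; rewrite /eqmod opprD addrACA. Qed.

Instance oppr_eqmod : Proper (eqmod ==> eqmod) (@GRing.opp A).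
Proof. by move=> x x' /IN; rewrite /eqmod opprB opprK addrC. Qed.

Instance mulr_eqmod : Proper (eqmod ==> eqmod ==> eqmod) (@GRing.mul A).
Proof.
move=> x x' hx y y' hy; have := ID (IMr y hx) (IMl x' hy).
by rewrite /eqmod mulrBl mulrBr addrA subrK.
Qed.

Instance I_eqmod : Proper (eqmod ==> iff) I.
Proof.
move=> x y xy; rewrite -!eqmod0.
by split=> h; rewrite ?xy // -xy.
Qed.

Instance central_mod_eqmod : Proper (eqmod ==> iff) (central_mod I).
Proof.
move=> x y xy; rewrite !central_modP.
by split=> h b; [rewrite -xy | rewrite xy]; apply: h.
Qed.

Lemma central_mod_mul x y :
  central_mod I x -> central_mod I y -> central_mod I (x * y).
Proof.
move=> /central_modP cx /central_modP cy b.
by rewrite -eqmodE -mulrA cy mulrA cx -mulrA; reflexivity.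
Qed.

Hypothesis I_central_sqr : forall u, central_mod I u -> I (u * u) -> I u.

Lemma centrally_essential_mod_commutative :
  centrally_essential_mod I -> commutative_mod I.
Proof.
case=> // ess a b; apply: contrapT => nab.
have [d [cd ncd]] :
    exists d, central_mod I (a * d - d * a) /\ ~ I (a * d - d * a).
  have [cab|ncab] := pselect (central_mod I (a * b - b * a)); first by exists b.
  have [x [y [/central_modP cx cy _ ny]]] := ess _ ncab; rewrite -eqmodE => axy.
  have e : a * (b * x) - b * x * a ≡ y.
    by rewrite -axy mulrBl mulrA -(mulrA b) cx mulrA; reflexivity.
  by exists (b * x); rewrite e; split.
move: cd ncd; set c := a * d - d * a => cc nc; have /central_modP ccP := cc.
have acd : a * c * d - d * (a * c) ≡ c * c.
  by rewrite -mulrA ccP mulrA mulrA -mulrBl; reflexivity.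
have nac : ~ central_mod I (a * c).
  by move=> /(_ d); rewrite acd => /(I_central_sqr cc).
have [z [w [/central_modP cz /central_modP cw _ nw]]] := ess _ nac.
rewrite -eqmodE => acz.
have ccz : I (c * c * z).
  rewrite -acd -eqmod0 mulrBl -(mulrA (a * c)) -(cz d) (mulrA (a * c)) acz (cw d).
  by rewrite -(mulrA d) acz subrr; reflexivity.
have cz0 : I (c * z).
  apply: I_central_sqr; first exact: central_mod_mul.
  by rewrite mulrA -(mulrA c) cz mulrA; apply: IMr.
by apply: nw; rewrite -acz -mulrA; apply: IMl.
Qed.

End CongruenceModIdeal.

Section RightIdeals.
Variable A : nzRingType.
Implicit Types (M N : A -> Prop) (x y : A).

Lemma right_ideal_full N : right_ideal N -> N 1 -> forall x, N x.
Proof. by case=> _ _ _ NM N1 x; rewrite -(mul1r x); apply: NM. Qed.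

Lemma right_ideal_two_sided (I M : A -> Prop) :
  commutative_mod I -> I `<=` M -> right_ideal M -> two_sided_ideal M.
Proof.
move=> comm IM Mid; split=> //; case: (Mid) => M0 MD MN MM; split=> // x r Mx.
by rewrite -[r * x](subrK (x * r)); apply: MD; [apply/IM/comm | apply: MM].
Qed.

Lemma maximal_right_idealP M : maximal_right_ideal M <->
  [/\ right_ideal M, ~ M 1 & forall y, ~ M y -> exists s, M (1 - y * s)].
Proof.
split.
- case=> Mid [x nMx] Mmax; split=> //; first by move/(right_ideal_full Mid).
  move=> y nMy; case: (Mid) => M0 MD MN MM.
  pose N z := exists m s, M m /\ z = m + y * s.
  have Nid : right_ideal N.
    split.
    + by exists 0, 0; rewrite mulr0 addr0.
    + move=> _ _ [m [s [Mm ->]]] [m' [s' [Mm' ->]]].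
      by exists (m + m'), (s + s'); rewrite mulrDr addrACA; split=> //; apply: MD.
    + move=> _ [m [s [Mm ->]]].
      by exists (- m), (- s); rewrite mulrN -opprD; split=> //; apply: MN.
    + move=> _ r [m [s [Mm ->]]].
      by exists (m * r), (s * r); rewrite mulrDl mulrA; split=> //; apply: MM.
  have MN' : M `<=` N by move=> m Mm; exists m, 0; rewrite mulr0 addr0.
  have [NM|N1] := Mmax N Nid MN'.
  + by case: nMy; apply/NM; exists 0, 1; rewrite add0r mulr1.
  + by have [m [s [Mm e]]] := N1 1; exists s; rewrite e addrK.
- case=> Mid nM1 Mco; split=> //; first by exists 1.
  move=> N Nid MN; have [NM|] := pselect (N `<=` M).
    by left=> x; split; [apply: NM | apply: MN].
  move=> /existsNP [y /not_implyP [Ny nMy]]; right; apply: right_ideal_full => //.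
  have [s /MN Ns] := Mco y nMy; case: Nid => _ ND _ NM.
  by rewrite -(subrK (y * s) 1); apply: ND => //; apply: NM.
Qed.

Lemma right_ideal_chain_union (K : Type) (F : K -> A -> Prop) (C : set K) :
  C !=set0 -> (forall k, C k -> right_ideal (F k)) ->
  (forall k l, C k -> C l -> F k `<=` F l \/ F l `<=` F k) ->
  right_ideal (fun x => exists2 k, C k & F k x).
Proof.
move=> [k0 Ck0] Fid Ftot; split.
- by exists k0 => //; case: (Fid _ Ck0).
- move=> x y [k Ck Fx] [l Cl Fy].
  have [kl|lk] := Ftot _ _ Ck Cl.
  + by exists l => //; case: (Fid _ Cl) => _ D _ _; apply: D => //; apply: kl.
  + by exists k => //; case: (Fid _ Ck) => _ D _ _; apply: D => //; apply: lk.
- by move=> x [k Ck Fx]; exists k => //; case: (Fid _ Ck) => _ _ N _; apply: N.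
- by move=> x r [k Ck Fx]; exists k => //; case: (Fid _ Ck) => _ _ _ M; apply: M.
Qed.

Lemma exists_maximal_right_ideal I : right_ideal I -> ~ I 1 ->
  exists M, maximal_right_ideal M /\ I `<=` M.
Proof.
move=> Iid nI1.
pose T := {N : A -> Prop | [/\ right_ideal N, ~ N 1 & I `<=` N]}.
pose R (s t : T) := `[< sval s `<=` sval t >].
have t0 : T by exists I; split.
have [[M [Mid nM1 IM]] Mmax] : exists t, premaximal R t.
  apply: (ZL_preorder t0).
  - by move=> t; apply/asboolP.
  - by move=> r s t /asboolP rs /asboolP st; apply/asboolP => x /rs /st.
  move=> C Ctot; have [C0|nC0] := pselect (C !=set0); last first.
    by exists t0 => s Cs; case: nC0; exists s.
  have [s0 Cs0] := C0.
  pose U x := exists2 s, C s & sval s x.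
  have Uid : right_ideal U.
    apply: (right_ideal_chain_union (F := sval) C0) => [s _|s t Cs Ct].
      by case: (svalP s).
    by have [/asboolP|/asboolP] := Ctot s t Cs Ct; [left|right].
  have nU1 : ~ U 1 by case=> s _; case: (svalP s).
  have IU : I `<=` U.
    by move=> x Ix; exists s0 => //; case: (svalP s0) => _ _; apply.
  exists (exist _ U (And3 Uid nU1 IU)) => s Cs.
  by apply/asboolP => x Sx; exists s.
exists M; split=> //; split=> //; first by exists 1.
move=> N Nid MN; have [N1|nN1] := pselect (N 1).
  by right; apply: right_ideal_full.
have /asboolP NM :=
  Mmax (exist _ N (And3 Nid nN1 (fun x => MN x \o IM x))) (asboolT MN).
by left=> x; split; [apply: NM | apply: MN].
Qed.

End RightIdeals.

(* Left ideals of A are, by conversion, right ideals of the converse ring A^c. *)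
Section LeftIdeals.
Variable A : nzRingType.

Lemma left_ideal_two_sided (I M : A -> Prop) :
  commutative_mod I -> I `<=` M -> left_ideal M -> two_sided_ideal M.
Proof.
move=> comm IM Mid.
by have [] := @right_ideal_two_sided A^c I M (fun a b => comm b a) IM Mid.
Qed.

Lemma maximal_left_idealP (M : A -> Prop) : maximal_left_ideal M <->
  [/\ left_ideal M, ~ M 1 & forall y, ~ M y -> exists s, M (1 - s * y)].
Proof. exact: (@maximal_right_idealP A^c M). Qed.

End LeftIdeals.

Section Jacobson.
Variable A : nzRingType.
Local Notation J := (@jacobson A).

Lemma maximal_right_ideal_colon (M : A -> Prop) r :
  maximal_right_ideal M -> ~ M r -> maximal_right_ideal (fun x => M (r * x)).
Proof.
move=> /maximal_right_idealP [[M0 MD MN MM] _ Mco] nMr.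
apply/maximal_right_idealP; split; last 1 first.
- move=> y /Mco [s Ms]; exists (s * r).
  by rewrite mulrBr mulr1 !mulrA -[r in r - _]mul1r -mulrBl; apply: MM.
- split; first by rewrite mulr0.
  + by move=> x y Mx My; rewrite mulrDr; apply: MD.
  + by move=> x Mx; rewrite mulrN; apply: MN.
  + by move=> x s Mx; rewrite mulrA; apply: MM.
- by rewrite mulr1.
Qed.

Lemma jacobson_two_sided : two_sided_ideal J.
Proof.
have Jr : right_ideal J.
  split.
  - by move=> M [[]].
  - move=> x y Jx Jy M hM; case: (hM) => -[_ MD _ _] _ _.
    by apply: MD; [apply: Jx | apply: Jy].
  - by move=> x Jx M hM; case: (hM) => -[_ _ MN _] _ _; apply: MN; apply: Jx.
  - by move=> x r Jx M hM; case: (hM) => -[_ _ _ MM] _ _; apply: MM; apply: Jx.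
split=> //; case: Jr => J0 JD JN _; split=> // x r Jx M hM.
have [Mr|nMr] := pselect (M r).
  by case: (hM) => -[_ _ _ MM] _ _; apply: MM.
exact: Jx _ (maximal_right_ideal_colon hM nMr).
Qed.

Lemma jacobson_central_sqr u : central_mod J u -> J (u * u) -> J u.
Proof.
move=> cu Juu M hM; apply: contrapT => nMu.
have /maximal_right_idealP [[_ MD _ MM] _ Mco] := hM.
have [s Ms] := Mco u nMu; set m := 1 - u * s in Ms; apply: nMu.
have -> : u = (u * m - m * u) + m * u + u * u * s.
  by rewrite subrK /m mulrBr mulr1 mulrA subrK.
by apply: (MD); [apply: MD; [apply: cu | apply: (MM)] | apply: MM; apply: Juu].
Qed.

Lemma jacobson_one_sub_rinv k : J k -> exists u, (1 - k) * u = 1.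
Proof.
move=> Jk; apply: contrapT => /forallNP ninv.
pose P x := exists t, x = (1 - k) * t.
have Pid : right_ideal P.
  split.
  - by exists 0; rewrite mulr0.
  - by move=> _ _ [t ->] [t' ->]; exists (t + t'); rewrite mulrDr.
  - by move=> _ [t ->]; exists (- t); rewrite mulrN.
  - by move=> _ r [t ->]; exists (t * r); rewrite mulrA.
have nP1 : ~ P 1 by case=> t /esym /ninv.
have [M [hM PM]] := exists_maximal_right_ideal Pid nP1.
have /maximal_right_idealP [[_ MD _ _] nM1 _] := hM.
apply: nM1; rewrite -(subrK k 1); apply: MD; last exact: Jk.
by apply: PM; exists 1; rewrite mulr1.
Qed.

Lemma jacobson_one_sub_linv k : J k -> exists u, u * (1 - k) = 1.
Proof.
move=> Jk; have [u ku] := jacobson_one_sub_rinv Jk.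
(* u = 1 + k u has a right inverse v as well, and then v = 1 - k. *)
have [v uv] : exists v, u * v = 1.
  have Jku : J (- (k * u)).
    by case: jacobson_two_sided => -[_ _ JN JM] _; apply: JN; apply: JM.
  have [v] := jacobson_one_sub_rinv Jku.
  by rewrite opprK -{1}ku mulrBl mul1r subrK; exists v.
have vk : v = 1 - k by rewrite -[v]mul1r -{1}ku -mulrA uv mulr1.
by exists u; rewrite -vk.
Qed.

Lemma jacobson_sub_maximal_left (M : A -> Prop) :
  maximal_left_ideal M -> J `<=` M.
Proof.
move=> /maximal_left_idealP [[_ _ _ MM] nM1 Mco] j Jj; apply: contrapT.
move=> /Mco [s Ms]; have [v vsj] : exists v, v * (1 - s * j) = 1.
  by apply: jacobson_one_sub_linv; case: jacobson_two_sided => _ [_ _ _]; apply.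
by apply: nM1; rewrite -vsj; apply: MM.
Qed.

End Jacobson.

Theorem mainTheorem1 (A : nzRingType) :
  centrally_essential_mod (@jacobson A) ->
  commutative_mod (@jacobson A) /\ right_quasi_invariant A /\ left_quasi_invariant A.
Proof.
move=> ess; have comm := centrally_essential_mod_commutative
  (@jacobson_two_sided A) (@jacobson_central_sqr A) ess.
split=> //; split=> M hM.
- apply: right_ideal_two_sided comm (fun x Jx => Jx M hM) _.
  by case: hM.
- apply: left_ideal_two_sided comm (jacobson_sub_maximal_left hM) _.
  by case: hM.
Qed.
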